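(* Let $K$ be a field, $c\in K\setminus\{0\}$ and $n\ge1$. There is a bijection between the set $\Psi_c^n$ of $c$-polygonal sequences of order $n$ and the set $\Psi_{-c}^n$ of $(-c)$-polygonal sequences of order $n$.
   Context: For a nonzero $a\in K$, the $a$-continuant polynomials $P_k^a$ ($k\ge-1$) are defined by $P_{-1}^a=0$, $P_0^a=1$, and for $k\ge1$, $P_k^a(x_1,\dots,x_k)=x_kP_{k-1}^a(x_1,\dots,x_{k-1})+aP_{k-2}^a(x_1,\dots,x_{k-2})$. A family $(x_i)_{i\in\mathbb{Z}}$ in $K$ is $n$-admissible (for $a$) if $P_{n+2}^a(x_i,\dots,x_{i+n+1})=0$ for all $i$. Let $\mathbb{B}_n=\{(i,j)\in\mathbb{Z}^2:-2\le j-i\le n+1\}$. An $a$-frieze of order $n$ is a function $f:\mathbb{B}_n\to K$ for which there is an $n$-admissible family $(x_i)$ (for $a$) with $f(i,j)=P^a_{j-i+1}(x_i,\dots,x_j)$ for all $(i,j)\in\mathbb{B}_n$. An $a$-polygonal sequence of order $n$ is a tuple $(f(m+1,m+1),f(m+2,m+2),\dots,f(m+n+3,m+n+3))\in K^{n+3}$ of $n+3$ consecutive first-row entries of some $a$-frieze $f$ of order $n$ (for some $m\in\mathbb{Z}$); $\Psi_a^n$ denotes the set of all of them. *)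

From HB Require Import structures.
From mathcomp Require Import all_boot all_order all_algebra.
Set Implicit Arguments. Unset Strict Implicit. Unset Printing Implicit Defensive.
Import Order.TTheory GRing.Theory Num.Theory.
Local Open Scope ring_scope.

(* a-continuant P_k^a(x_1,...,x_k), with the variables given 0-indexed:
   x_j is (x (j-1)).  Pk a x 0 = P_0 = 1, Pk a x 1 = x_1 P_0 + a P_{-1} = x_1,
   Pk a x (k+2) = x_{k+2} P_{k+1} + a P_k. *)
Fixpoint Pk (K : fieldType) (a : K) (x : nat -> K) (k : nat) {struct k} : K :=
  match k with
  | 0%N => 1
  | k'.+1 =>
      match k' with
      | 0%N => x 0%N
      | k''.+1 => x k' * Pk a x k' + a * Pk a x k''
      end
  end.

(* P^a_m(x_i, ..., x_{i+m-1}) for an integer length m >= -1, with P_{-1} = 0. *)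
Definition contZ (K : fieldType) (a : K) (x : int -> K) (i : int) (m : int) : K :=
  match m with
  | Posz k => Pk a (fun t : nat => x (i + t%:Z)) k
  | Negz _ => 0
  end.

Definition admissible (K : fieldType) (a : K) (n : nat) (x : int -> K) : Prop :=
  forall i : int, Pk a (fun t : nat => x (i + t%:Z)) n.+2 = 0.

(* B_n = {(i,j) : -2 <= j - i <= n+1}; an a-frieze of order n is a function on
   B_n (modelled as f : int -> int -> K, values outside B_n irrelevant). *)
Definition inBn (n : nat) (i j : int) : bool := (-2 <= j - i) && (j - i <= n.+1%:Z).

Definition is_frieze (K : fieldType) (a : K) (n : nat) (f : int -> int -> K) : Prop :=
  exists x : int -> K, admissible a n x /\
    forall i j : int, inBn n i j -> f i j = contZ a x i (j - i + 1).

Definition polygonal (K : fieldType) (a : K) (n : nat) (t : (n.+3).-tuple K) : Prop :=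
  exists (f : int -> int -> K) (m : int), is_frieze a n f /\
    forall k : 'I_(n.+3), tnth t k = f (m + k%:Z + 1) (m + k%:Z + 1).

From mathcomp Require Import all_boot all_order all_algebra.
From mathcomp Require Import ring zify.
From Stdlib Require Import ProofIrrelevance.
Set Implicit Arguments. Unset Strict Implicit. Unset Printing Implicit Defensive.
Import Order.TTheory GRing.Theory Num.Theory.
Local Open Scope ring_scope.

(* Twisting the variables by alternating signs, x_t |-> e (-1)^t x_t with
   e^2 = 1, turns a-continuants into (-a)-continuants up to the sign
   e^k (-1)^(k choose 2).  Hence changing the signs of every other entry maps
   c-friezes to (-c)-friezes and c-polygonal sequences to (-c)-polygonal ones;
   being an involution, this sign change is the required bijection. *)

Lemma PkSS (K : fieldType) (a : K) (x : nat -> K) (k : nat) :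
  Pk a x k.+2 = x k.+1 * Pk a x k.+1 + a * Pk a x k.
Proof. by []. Qed.

Lemma Pk_sign_twist (K : fieldType) (a e : K) (x y : nat -> K) (k : nat) :
  e * e = 1 -> (forall t, y t = e * (-1) ^+ t * x t) ->
  Pk (- a) y k = e ^+ k * (-1) ^+ 'C(k, 2) * Pk a x k.
Proof.
move=> ee1 y_x.
suff twist2 : forall k, Pk (- a) y k = e ^+ k * (-1) ^+ 'C(k, 2) * Pk a x k /\
    Pk (- a) y k.+1 = e ^+ k.+1 * (-1) ^+ 'C(k.+1, 2) * Pk a x k.+1.
  by case: (twist2 k).
elim=> [|{}k [IHk IHk1]]; first by rewrite /= y_x !bin_small // !expr0 !mulr1.
split=> //.
have binS2 : 'C(k.+2, 2) = ('C(k, 2) + (k + k).+1)%N.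
  by rewrite !binS bin1 bin0; lia.
have ek2 : e ^+ k.+2 = e ^+ k by rewrite !exprS mulrA ee1 mul1r.
have sk2 : (-1) ^+ k * (-1) ^+ k = 1 :> K by rewrite -exprMn mulN1r opprK expr1n.
rewrite !PkSS IHk IHk1 y_x ek2 binS2 binS bin1 !exprD !exprS exprD sk2.
transitivity (e ^+ k * (-1) ^+ 'C(k, 2) *
  (- (e * e) * ((-1) ^+ k * (-1) ^+ k) * x k.+1 * Pk a x k.+1 - a * Pk a x k)); first ring.
rewrite ee1 sk2; ring.
Qed.

Lemma admissible_sign_twist (K : fieldType) (a : K) (n : nat) (x : int -> K) (s : int) :
  admissible a n x -> admissible (- a) n (fun j => (-1) ^ (j - s) * x j).
Proof.
move=> adm_x i; set e : K := (-1) ^ (i - s).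
have ee1 : e * e = 1 by rewrite -expfzMl mulN1r opprK exp1rz.
rewrite (@Pk_sign_twist _ a e (fun t : nat => x (i + t%:Z))) ?adm_x ?mulr0 // => t.
have -> : i + t%:Z - s = (i - s) + t%:Z by ring.
by rewrite expfzDr ?oppr_eq0 ?oner_eq0.
Qed.

Definition altsign (K : fieldType) (n : nat) (t : n.-tuple K) : n.-tuple K :=
  [tuple (-1) ^+ val k * tnth t k | k < n].

Lemma altsignK (K : fieldType) (n : nat) : involutive (@altsign K n).
Proof.
move=> t; apply: eq_from_tnth => k.
by rewrite !tnth_mktuple mulrA -exprMn mulN1r opprK expr1n mul1r.
Qed.

Lemma polygonal_altsign (K : fieldType) (a : K) (n : nat) (t : (n.+3).-tuple K) :
  polygonal a t -> polygonal (- a) (altsign t).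
Proof.
case=> f [m [[x [adm_x f_x]] t_f]].
pose y := fun j => (-1) ^ (j - (m + 1)) * x j.
exists (fun i j => contZ (- a) y i (j - i + 1)), m; split.
  by exists y; split=> //; exact: admissible_sign_twist.
move=> k; rewrite tnth_mktuple t_f f_x ?/inBn subrr // add0r /= /y !addr0.
by have -> : m + k%:Z + 1 - (m + 1) = k%:Z by ring.
Qed.

Lemma bij_sig_involution (T : Type) (f : T -> T) (P Q : T -> Prop) :
  involutive f -> (forall t, P t -> Q (f t)) -> (forall t, Q t -> P (f t)) ->
  exists g : {t | P t} -> {t | Q t}, bijective g.
Proof.
move=> fK PQ QP.
exists (fun u => exist Q (f (sval u)) (PQ _ (proj2_sig u))).
exists (fun u => exist P (f (sval u)) (QP _ (proj2_sig u))).
  by case=> t pt; apply: eq_sig_hprop => [? ? ?|]; [exact: proof_irrelevance | exact: fK].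
by case=> t qt; apply: eq_sig_hprop => [? ? ?|]; [exact: proof_irrelevance | exact: fK].
Qed.

Theorem mainTheorem14 (K : fieldType) (c : K) (n : nat) (hc : c != 0) (hn : (1 <= n)%N) :
  exists g : {t : (n.+3).-tuple K | polygonal c t} ->
             {t : (n.+3).-tuple K | polygonal (- c) t},
    bijective g.
Proof.
apply: bij_sig_involution (@altsignK K n.+3) (@polygonal_altsign K c n) _.
by move=> t /polygonal_altsign; rewrite opprK.
Qed.
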